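(* Let $S,T$ be left inverse semi-braces, $\sigma,\delta,\mathfrak b$ as follows: $\sigma:T\to\mathrm{Aut}(S)$ a homomorphism from $(T,\cdot)$ into the automorphism group of the left inverse semi-brace $S$ (${}^ua=\sigma(u)(a)$), $\delta:S\to\mathrm{End}(T,+)$ a map ($u^a=\delta(a)(u)$), and $\mathfrak b$ a $\delta$-cocycle satisfying $\mathfrak b(a\,{}^ub,\lambda_a({}^uc))+(uv)^{\lambda_a({}^uc)}+u(\mathfrak b({}^{u^{-1}}(a^{-1}),c)+(u^{-1})^c)=u(\mathfrak b(b,c)+v^c)$ for all $a,b,c\in S$, $u,v\in T$. Let $B$ be the asymmetric product, i.e. $S\times T$ with $(a,u)+(b,v)=(a+b,\mathfrak b(a,b)+u^b+v)$, $(a,u)(b,v)=(a\,{}^ub,uv)$. Then, writing $\Omega^b_{u,v}=(u^{-1})^b+v$ and $Y=\mathfrak b({}^{u^{-1}}a^{-1},b)+\Omega^b_{u,v}$, the map $r_B$ associated to $B$ is given by $$r_B((a,u),(b,v))=\left(\left(\lambda_a({}^ub),\,u\,Y\right),\ \left({}^{Y^{-1}u^{-1}}\rho_{{}^ub}(a),\ Y^{-1}v\right)\right)$$ for all $(a,u),(b,v)\in S\times T$.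
   Context: An inverse semigroup is a semigroup $(S,\cdot)$ in which for each $a$ there is a unique $a^{-1}$ with $aa^{-1}a=a$, $a^{-1}aa^{-1}=a^{-1}$. A left inverse semi-brace is a triple $(S,+,\cdot)$ with $(S,+)$ a semigroup, $(S,\cdot)$ an inverse semigroup and $a(b+c)=ab+a(a^{-1}+c)$ for all $a,b,c$. Set $\lambda_a(b)=a(a^{-1}+b)$, $\rho_b(a)=(a^{-1}+b)^{-1}b$; the map associated to $X$ is $r_X(x,y)=(\lambda_x(y),\rho_y(x))$. An automorphism of the left inverse semi-brace $S$ is a bijection preserving both operations. A $\delta$-cocycle is a map $\mathfrak b:S\times S\to T$ with $\mathfrak b(a+b,c)+\mathfrak b(a,b)^c+(u^b)^c+v^c=\mathfrak b(a,b+c)+u^{b+c}+\mathfrak b(b,c)+v^c$ for all $a,b,c\in S$, $u,v\in T$. Under these hypotheses $B$ is a left inverse semi-brace. *)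

Set Implicit Arguments.

Section Defs.
Variable X : Type.
Variables (add mul : X -> X -> X) (inv : X -> X).

Definition is_inverse_semigroup : Prop :=
  (forall a b c, mul a (mul b c) = mul (mul a b) c) /\
  (forall a, mul (mul a (inv a)) a = a) /\
  (forall a, mul (mul (inv a) a) (inv a) = inv a) /\
  (forall a x, mul (mul a x) a = a -> mul (mul x a) x = x -> x = inv a).

Definition is_left_inverse_semibrace : Prop :=
  (forall a b c, add a (add b c) = add (add a b) c) /\
  is_inverse_semigroup /\
  (forall a b c, mul a (add b c) = add (mul a b) (mul a (add (inv a) c))).

Definition lam (a b : X) : X := mul a (add (inv a) b).
Definition rho (b a : X) : X := mul (inv (add (inv a) b)) b.

Definition rmap (x y : X) : X * X := (lam x y, rho y x).
End Defs.

Definition is_semibrace_aut (S : Type) (add mul : S -> S -> S) (f : S -> S) : Prop :=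
  (exists g : S -> S, (forall x, g (f x) = x) /\ (forall y, f (g y) = y)) /\
  (forall a b, f (add a b) = add (f a) (f b)) /\
  (forall a b, f (mul a b) = mul (f a) (f b)).

Definition is_delta_cocycle (S T : Type) (addS : S -> S -> S) (addT : T -> T -> T)
  (delta : S -> T -> T) (bc : S -> S -> T) : Prop :=
  forall (a b c : S) (u v : T),
    addT (addT (addT (bc (addS a b) c) (delta c (bc a b))) (delta c (delta b u))) (delta c v)
    = addT (addT (addT (bc a (addS b c)) (delta (addS b c) u)) (bc b c)) (delta c v).

Definition asym_add (S T : Type) (addS : S -> S -> S) (addT : T -> T -> T)
  (delta : S -> T -> T) (bc : S -> S -> T) (x y : S * T) : S * T :=
  (addS (fst x) (fst y), addT (addT (bc (fst x) (fst y)) (delta (fst y) (snd x))) (snd y)).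

Definition asym_mul (S T : Type) (mulS : S -> S -> S) (mulT : T -> T -> T)
  (sigma : T -> S -> S) (x y : S * T) : S * T :=
  (mulS (fst x) (sigma (snd x) (fst y)), mulT (snd x) (snd y)).

(** The inverse of [(a, u)] in the asymmetric product is [(σ_{u⁻¹}(a⁻¹), u⁻¹)]:
    idempotents of [T] act trivially on [S] (their action is an injective
    idempotent map), and automorphisms commute with inversion.  Substituting
    this inverse into the definitions of [λ] and [ρ] gives [r_B]. *)


Set Implicit Arguments.

Section InverseSemigroup.
Variables (X : Type) (mul : X -> X -> X) (inv : X -> X).
Hypothesis hX : is_inverse_semigroup mul inv.

Lemma mulV_idem (a : X) : mul (mul a (inv a)) (mul a (inv a)) = mul a (inv a).
Proof. destruct hX as [mulA [mulVK _]]. now rewrite mulA, mulVK. Qed.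

Lemma Vmul_idem (a : X) : mul (mul (inv a) a) (mul (inv a) a) = mul (inv a) a.
Proof. destruct hX as [mulA [_ [VmulK _]]]. now rewrite mulA, VmulK. Qed.

Lemma morph_inv (Y : Type) (mulY : Y -> Y -> Y) (invY : Y -> Y) (f : X -> Y) :
  is_inverse_semigroup mulY invY ->
  (forall a b, f (mul a b) = mulY (f a) (f b)) ->
  forall a, f (inv a) = invY (f a).
Proof.
  intros [_ [_ [_ invY_unique]]] fM a. destruct hX as [_ [mulVK [VmulK _]]].
  apply invY_unique; rewrite <- !fM.
  - now rewrite mulVK.
  - now rewrite VmulK.
Qed.

End InverseSemigroup.

Lemma injective_idempotent_id (A : Type) (f g : A -> A) :
  (forall x, g (f x) = x) -> (forall x, f (f x) = f x) -> forall x, f x = x.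
Proof. intros fK f_idem x. now rewrite <- (fK (f x)), f_idem, fK. Qed.

Section AsymmetricProduct.
Variables (S T : Type).
Variables (addS mulS : S -> S -> S) (invS : S -> S).
Variables (addT mulT : T -> T -> T) (invT : T -> T).
Hypothesis hS : is_inverse_semigroup mulS invS.
Hypothesis hT : is_inverse_semigroup mulT invT.
Hypothesis addTA : forall u v w, addT u (addT v w) = addT (addT u v) w.
Variable sigma : T -> S -> S.
Hypothesis sigma_aut : forall u, is_semibrace_aut addS mulS (sigma u).
Hypothesis sigma_hom : forall u v a, sigma (mulT u v) a = sigma u (sigma v a).
Variables (delta : S -> T -> T) (bc : S -> S -> T).

Definition inv_add_snd (a : S) (u : T) (b : S) (v : T) : T :=
  addT (bc (sigma (invT u) (invS a)) b) (addT (delta b (invT u)) v).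

Lemma sigma_idem (e : T) : mulT e e = e -> forall a, sigma e a = a.
Proof.
  intros e_idem. destruct (sigma_aut e) as [[g [sigmaK _]] _].
  apply (injective_idempotent_id (sigma e) g sigmaK). intros a.
  now rewrite <- sigma_hom, e_idem.
Qed.

Lemma sigma_mulV (u : T) (a : S) : sigma u (sigma (invT u) a) = a.
Proof. rewrite <- sigma_hom. exact (sigma_idem (mulV_idem hT u) a). Qed.

Lemma sigma_Vmul (u : T) (a : S) : sigma (invT u) (sigma u a) = a.
Proof. rewrite <- sigma_hom. exact (sigma_idem (Vmul_idem hT u) a). Qed.

Lemma sigma_inv (u : T) (a : S) : sigma u (invS a) = invS (sigma u a).
Proof.
  destruct (sigma_aut u) as [_ [_ sigmaM]].
  exact (morph_inv hS (sigma u) hS sigmaM a).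
Qed.

Variable invB : S * T -> S * T.
Hypothesis hB : is_inverse_semigroup (asym_mul mulS mulT sigma) invB.

Lemma asym_inv (a : S) (u : T) : invB (a, u) = (sigma (invT u) (invS a), invT u).
Proof.
  destruct hB as [_ [_ [_ invB_unique]]].
  destruct hS as [_ [mulSVK [VmulSK _]]], hT as [_ [mulTVK [VmulTK _]]].
  destruct (sigma_aut (invT u)) as [_ [_ sigmaM]].
  symmetry; apply invB_unique; unfold asym_mul; simpl.
  - now rewrite sigma_mulV, sigma_hom, sigma_mulV, mulSVK, mulTVK.
  - now rewrite (sigma_idem (Vmul_idem hT u)), <- !sigmaM, VmulSK, VmulTK.
Qed.

Let addB := asym_add addS addT delta bc.
Let mulB := asym_mul mulS mulT sigma.

Lemma inv_add_asym (a b : S) (u v : T) :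
  addB (invB (a, u)) (b, v)
  = (addS (sigma (invT u) (invS a)) b, inv_add_snd a u b v).
Proof. unfold addB, asym_add, inv_add_snd. rewrite asym_inv. simpl. now rewrite addTA. Qed.

Lemma lam_asym (a b : S) (u v : T) :
  lam addB mulB invB (a, u) (b, v)
  = (lam addS mulS invS a (sigma u b), mulT u (inv_add_snd a u b v)).
Proof.
  unfold lam. rewrite inv_add_asym. unfold mulB, asym_mul. simpl.
  destruct (sigma_aut u) as [_ [sigmaD _]].
  now rewrite sigmaD, sigma_mulV.
Qed.

Lemma rho_asym (a b : S) (u v : T) :
  rho addB mulB invB (b, v) (a, u)
  = (sigma (mulT (invT (inv_add_snd a u b v)) (invT u))
       (rho addS mulS invS (sigma u b) a),
     mulT (invT (inv_add_snd a u b v)) v).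
Proof.
  unfold rho. rewrite inv_add_asym, asym_inv. unfold mulB, asym_mul. simpl.
  destruct (sigma_aut (invT u)) as [_ [sigmaD sigmaM]].
  destruct (sigma_aut (invT (inv_add_snd a u b v))) as [_ [_ sigmaYM]].
  assert (sum_eq : addS (sigma (invT u) (invS a)) b
                   = sigma (invT u) (addS (invS a) (sigma u b)))
    by now rewrite sigmaD, sigma_Vmul.
  now rewrite sum_eq, sigma_hom, sigmaM, sigma_Vmul, <- sigma_inv, sigmaYM.
Qed.

End AsymmetricProduct.

Theorem proposition54
  (S T : Type)
  (addS mulS : S -> S -> S) (invS : S -> S)
  (addT mulT : T -> T -> T) (invT : T -> T)
  (hS : is_left_inverse_semibrace addS mulS invS)
  (hT : is_left_inverse_semibrace addT mulT invT)
  (sigma : T -> S -> S)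
  (sigma_aut : forall u, is_semibrace_aut addS mulS (sigma u))
  (sigma_hom : forall u v a, sigma (mulT u v) a = sigma u (sigma v a))
  (delta : S -> T -> T)
  (delta_end : forall a u v, delta a (addT u v) = addT (delta a u) (delta a v))
  (bc : S -> S -> T)
  (bc_cocycle : is_delta_cocycle addS addT delta bc)
  (bc_cond : forall (a b c : S) (u v : T),
     addT (addT (bc (mulS a (sigma u b)) (lam addS mulS invS a (sigma u c)))
                (delta (lam addS mulS invS a (sigma u c)) (mulT u v)))
          (mulT u (addT (bc (sigma (invT u) (invS a)) c) (delta c (invT u))))
     = mulT u (addT (bc b c) (delta c v)))
  (invB : S * T -> S * T)
  (hB : is_inverse_semigroup (asym_mul mulS mulT sigma) invB) :
  forall (a b : S) (u v : T),
    let Y := addT (bc (sigma (invT u) (invS a)) b) (addT (delta b (invT u)) v) in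
    rmap (asym_add addS addT delta bc) (asym_mul mulS mulT sigma) invB (a, u) (b, v)
    = ((lam addS mulS invS a (sigma u b), mulT u Y),
       (sigma (mulT (invT Y) (invT u)) (rho addS mulS invS (sigma u b) a),
        mulT (invT Y) v)).
Proof.
  destruct hS as [_ [hmulS _]], hT as [addTA [hmulT _]].
  intros a b u v Y. unfold rmap. f_equal.
  - exact (lam_asym addT hmulS hmulT addTA sigma_aut sigma_hom delta bc hB a b u v).
  - exact (rho_asym addT hmulS hmulT addTA sigma_aut sigma_hom delta bc hB a b u v).
Qed.
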